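(* Let $m\ge3$ be an integer and $p>m$ a prime not dividing $m$, and let $D=\{1,2,\dots,m-1\}\cup\{p^n:n\in\mathbb{N}\}$. Then $\chi(\mathbb{N}_D)=m$ and $\operatorname{doa}(D)=1$, so $\chi(\mathbb{N}_D)/\operatorname{doa}(D)=m$.
   Context: For $D\subseteq\mathbb{N}$, $\mathbb{N}_D$ is the graph with vertex set $\mathbb{N}$ in which $x,y$ are adjacent iff $|x-y|\in D$; $\chi(\mathbb{N}_D)$ is its chromatic number. A $k$-term $D$-diffsequence is a sequence of integers $x_1,\dots,x_k$ with $x_{i+1}-x_i\in D$ for all $i$; $D$ is $r$-accessible if every $r$-coloring of $\mathbb{N}$ admits monochromatic $k$-term $D$-diffsequences for all $k$, and $\operatorname{doa}(D)$ is the greatest $r$ for which $D$ is $r$-accessible. *)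

(* naturals (ssrnat). N = nat (0 included). *)
From mathcomp Require Import all_boot.
Set Implicit Arguments. Unset Strict Implicit. Unset Printing Implicit Defensive.

(* A distance set D is a predicate on nat (elements are meant positive). *)

(* A proper r-coloring of the distance graph N_D: vertices x,y adjacent iff |x-y| \in D. *)
Definition proper_coloring (D : nat -> Prop) (r : nat) (c : nat -> nat) : Prop :=
  (forall x, c x < r) /\
  (forall x y, x < y -> D (y - x) -> c x <> c y).

Definition colorable (D : nat -> Prop) (r : nat) : Prop :=
  exists c : nat -> nat, proper_coloring D r c.

Definition chromatic_number_is (D : nat -> Prop) (k : nat) : Prop :=
  colorable D k /\ forall j, colorable D j -> k <= j.

Definition diffseq (D : nat -> Prop) (k : nat) (x : nat -> nat) : Prop :=
  forall i, i.+1 < k -> x i < x i.+1 /\ D (x i.+1 - x i).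

Definition accessible (D : nat -> Prop) (r : nat) : Prop :=
  forall c : nat -> nat, (forall x, c x < r) ->
  forall k, exists x : nat -> nat,
    diffseq D k x /\ (forall i, i < k -> c (x i) = c (x 0)).

Definition doa_is (D : nat -> Prop) (r : nat) : Prop :=
  accessible D r /\ forall r', accessible D r' -> r' <= r.

Definition Dmp (m p : nat) (d : nat) : Prop :=
  (1 <= d <= m - 1) \/ exists n : nat, d = p ^ n.

From mathcomp Require Import all_boot zify.

(* The residue x %% m is a proper m-coloring, because no element of D is a
   multiple of m (p is coprime to m), and the clique {0, ..., m-1} shows that
   m colors are needed.  D is not 2-accessible: color
   N by the parity of x %/ p, i.e. alternately in blocks of length p.  A step
   d < p moves at most one block forward and a step p^n with n > 0 moves the
   odd number p^(n-1) of blocks, so a monochromatic diffsequence never leaves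
   its block; yet p + 1 terms increase by at least p. *)

Lemma proper_coloring_modn (D : nat -> Prop) m :
  0 < m -> (forall d, D d -> ~~ (m %| d)) -> proper_coloring D m (modn^~ m).
Proof.
move=> m_gt0 D_ndvd; split=> [x | x y lt_xy Dyx eq_mod]; first by rewrite ltn_mod.
by move/negP: (D_ndvd _ Dyx); apply; rewrite -eqn_mod_dvd ?(ltnW lt_xy) // eq_mod.
Qed.

Lemma clique_leq_colors (D : nat -> Prop) m j :
  (forall d, 0 < d < m -> D d) -> colorable D j -> m <= j.
Proof.
move=> D_small [c [c_lt c_proper]].
have c_inj : injective (fun i : 'I_m => Ordinal (c_lt i)).
  move=> i i' /(congr1 val) /= eq_c; apply: val_inj => /=.
  have lt_im := ltn_ord i; have lt_i'm := ltn_ord i'.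
  case: (ltngtP i i') => // lt_ii'.
  - by case: (c_proper _ _ lt_ii' (D_small _ _) eq_c); lia.
  - by case: (c_proper _ _ lt_ii' (D_small _ _) (esym eq_c)); lia.
by have := leq_card _ c_inj; rewrite !card_ord.
Qed.

Lemma accessible1 (D : nat -> Prop) d : 0 < d -> D d -> accessible D 1.
Proof.
move=> d_gt0 Dd c c_lt1 k; exists (fun i => i * d); split.
- by move=> i _; rewrite mulSn addnK; split=> //; lia.
- by move=> i _; have := c_lt1 (i * d); have := c_lt1 (0 * d); lia.
Qed.

Lemma accessibleW {D : nat -> Prop} {r r'} :
  r <= r' -> accessible D r' -> accessible D r.
Proof. by move=> le_rr' acc c c_lt; apply: acc => x; apply: leq_trans le_rr'. Qed.

Lemma Dmp_small m p d : 0 < d < m -> Dmp m p d.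
Proof. by left; lia. Qed.

Lemma Dmp_ndvd m p d : 1 < m -> coprime p m -> Dmp m p d -> ~~ (m %| d).
Proof.
move=> m_gt1 co_pm [d_small | [n ->]].
  by apply/negP => /dvdn_leq; lia.
apply/negP => dvd_m_pn.
have : coprime m (p ^ n) by rewrite coprimeXr // coprime_sym.
by rewrite /coprime (gcdn_idPl dvd_m_pn) => /eqP m1; rewrite m1 in m_gt1.
Qed.

Lemma odd_divn_addr_small p a d : d < p ->
  odd ((a + d) %/ p) = odd (a %/ p) -> (a + d) %/ p = a %/ p.
Proof.
move=> lt_dp.
have split_q : (a + d) %/ p = a %/ p + (a %% p + d) %/ p.
  by rewrite {1}(divn_eq a p) -addnA divnMDl //; lia.
have carry_lt2 : (a %% p + d) %/ p < 2.
  by rewrite ltn_divLR; [have := ltn_mod a p|]; lia.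
rewrite split_q oddD.
by case: ((a %% p + d) %/ p) carry_lt2 => [|[|]] //= _; rewrite ?addn0 // addbT; case: odd.
Qed.

Lemma odd_divn_addr_pow p a n : odd p -> 0 < n ->
  odd ((a + p ^ n) %/ p) = ~~ odd (a %/ p).
Proof.
move=> p_odd; case: n => // n _.
by rewrite divnDr ?dvdn_exp // expnS mulKn ?odd_gt0 // oddD oddX p_odd orbT addbT.
Qed.

Lemma Dmp_divn_step {m p a d} : odd p -> 1 < p -> m <= p -> Dmp m p d ->
  odd ((a + d) %/ p) = odd (a %/ p) -> (a + d) %/ p = a %/ p.
Proof.
move=> p_odd p_gt1 le_mp [d_small | [[|n] ->]].
- by apply: odd_divn_addr_small; lia.
- by apply: odd_divn_addr_small.
- by rewrite odd_divn_addr_pow //; case: odd.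
Qed.

Definition block_parity p x : nat := odd (x %/ p).

Lemma monochromatic_diffseq_block {m p k x} : odd p -> 1 < p -> m <= p ->
  diffseq (Dmp m p) k x ->
  (forall i, i < k -> block_parity p (x i) = block_parity p (x 0)) ->
  forall i, i < k -> x i %/ p = x 0 %/ p /\ x 0 + i <= x i.
Proof.
move=> p_odd p_gt1 le_mp x_diff x_mono.
elim=> [|i IH] lt_ik; first by rewrite addn0.
have [eq_q le_xi] := IH (ltnW lt_ik).
have [lt_x Dx] := x_diff i lt_ik.
have step : x i.+1 %/ p = x i %/ p.
  rewrite -(subnKC (ltnW lt_x)); apply: (Dmp_divn_step p_odd p_gt1 le_mp Dx).
  rewrite subnKC ?(ltnW lt_x) //.
  move: (x_mono _ lt_ik) (x_mono _ (ltnW lt_ik)); rewrite /block_parity.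
  by do 3!case: (odd _).
by rewrite step eq_q; split=> //; lia.
Qed.

Lemma Dmp_not_accessible2 {m p} : odd p -> 1 < p -> m <= p -> ~ accessible (Dmp m p) 2.
Proof.
move=> p_odd p_gt1 le_mp acc.
have [x [x_diff x_mono]] := acc (block_parity p) (fun y => leq_b1 _) p.+1.
have [eq_q le_xp] := monochromatic_diffseq_block p_odd p_gt1 le_mp x_diff x_mono p (ltnSn p).
have := leq_div2r p le_xp.
by rewrite divnDr ?dvdnn // divnn (ltnW p_gt1) eq_q addn1 ltnn.
Qed.

Theorem mainTheorem14 (m p : nat) :
  3 <= m -> prime p -> m < p -> ~~ (p %| m) ->
  chromatic_number_is (Dmp m p) m /\ doa_is (Dmp m p) 1.
Proof.
move=> m_ge3 p_prime lt_mp p_ndvd_m.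
have p_gt1 := prime_gt1 p_prime.
have p_odd : odd p by case: (even_prime p_prime) => // p2; lia.
have co_pm : coprime p m by rewrite prime_coprime.
split; split.
- exists (modn^~ m); apply: proper_coloring_modn => [|d]; first lia.
  by apply: Dmp_ndvd => //; lia.
- by move=> j; apply: clique_leq_colors => d; apply: Dmp_small.
- by apply: (@accessible1 _ 1) => //; apply: Dmp_small; lia.
- move=> r acc; rewrite leqNgt; apply/negP => lt_1r.
  exact: Dmp_not_accessible2 p_odd p_gt1 (ltnW lt_mp) (accessibleW lt_1r acc).
Qed.
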